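(* There exists a constant $C \geq 1$ such that \[ \sum_{q=1}^Q \mathbf{1}_{R_q} \leq C K\Bigl(1 \vee \frac{\|x\|_\infty}{t}\Bigr). \]
   Context: Let $d \geq 2$. Let $\omega=(\omega(x))_{x \in \mathbb{Z}^d}$ be independent random variables with a common law on $\mathbb{N}_0$, not concentrated at $0$. Independently of $\omega$, let $(S_k(x,\ell))_{k \geq 0}$, $x \in \mathbb{Z}^d$, $\ell \in \mathbb{N}$, be independent simple random walks on $\mathbb{Z}^d$ with $S_0(x,\ell)=x$. For $x,y \in \mathbb{Z}^d$ let $\tau(x,y):=\inf\{k \geq 0: S_k(x,\ell)=y \text{ for some } 1 \leq \ell \leq \omega(x)\}$ ($:=\infty$ if $\omega(x)=0$). Let $C_0\in(0,\infty)$ be a constant for which there are $0<c,c'<\infty$, $0<a<1$ with $P(T(0,x)\ge s\mid\omega(0)\ge 1)\le c\,e^{-c's^{a}}$ for all $x\in\mathbb{Z}^d$ and $s\ge C_0\|x\|_1$, where $T(x,y):=\inf\{\sum_{i=0}^{m-1}\tau(x_i,x_{i+1}): m \geq 1,\ x=x_0,\dots,x_m=y\}$. Fix $\gamma>0$ and a constant $K>d(C_0+\gamma+1)$. For $t>0$ define $\sigma_t(x,y)$ by: $\sigma_t(x,y):=4Kt$ if $\|x-y\|_\infty\le t$ and $\tau(x,y)>4Kt$; $\sigma_t(x,y):=4K\|x-y\|_\infty$ if $\|x-y\|_\infty>t$; $\sigma_t(x,y):=\tau(x,y)$ otherwise; and $T_t(x,y):=\inf\{\sum_{i=0}^{m-1}\sigma_t(x_i,x_{i+1}):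 m\ge 1,\ x=x_0,\dots,x_m=y\}$. Fix $x\in\mathbb{Z}^d\setminus\{0\}$ and $t>0$. Tile $\mathbb{Z}^d$ with copies $\Lambda_q$, $q\in\mathbb{N}$, of $(-t/2,t/2]^d$, each centered at a point of $\mathbb{Z}^d$, so that each site lies in exactly one box, numbered so that $T_t(0,x)$ depends only on the configuration ($\omega$ and the walks started) in $\Lambda_1,\dots,\Lambda_Q$ for some finite $Q$. Let $\pi_t(0,x)=(0=x_0,x_1,\dots,x_m=x)$ be a sequence with $T_t(0,x)=\sum_{i=0}^{m-1}\sigma_t(x_i,x_{i+1})$, chosen by a deterministic tie-breaking rule, and let $R_q$ be the event that $\pi_t(0,x)$ intersects $\Lambda_q$. The constant $C$ does not depend on $x$, $t$ or the configuration. *)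

From HB Require Import structures.
From mathcomp Require Import all_boot all_order all_algebra.
From mathcomp Require Import all_classical all_reals ereal.
Set Implicit Arguments.
Unset Strict Implicit.
Unset Printing Implicit Defensive.
Import Order.TTheory GRing.Theory Num.Theory.
Local Open Scope classical_set_scope.
Local Open Scope ring_scope.

Definition site (d : nat) := 'I_d -> int.
Definition site0 (d : nat) : site d := fun _ => 0.
Arguments site0 d : clear implicits.

Definition dist_inf (d : nat) (a b : site d) : nat :=
  \max_(i < d) `|a i - b i|%N.

Definition nn_step (d : nat) (a b : site d) : Prop :=
  (\sum_(i < d) `|a i - b i|%N)%N = 1%N.

(* S x l = (S_k(x,l))_k is a simple-random-walk path started at x, l >= 1. *)
Definition walk_family (d : nat) (S : site d -> nat -> nat -> site d) : Prop :=
  forall x l, (1 <= l)%N ->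
    S x l 0%N = x /\ forall k, nn_step (S x l k) (S x l k.+1).

Section Passage.
Variables (R : realType) (d : nat).
Variables (K t : R) (om : site d -> nat) (S : site d -> nat -> nat -> site d).

Definition tau (x y : site d) : \bar R :=
  ereal_inf [set (k%:R)%:E | k in
    [set k : nat | exists l, (1 <= l <= om x)%N /\ S x l k = y]].

Definition sigma_t (x y : site d) : R :=
  let n : R := (dist_inf x y)%:R in
  if t < n then 4 * K * n
  else if ((4 * K * t)%:E < tau x y)%E then 4 * K * t
  else fine (tau x y).

(* a sequence x = x_0, x_1, ..., x_m = y with m >= 1 is written x :: s *)
Definition is_path (x : site d) (s : seq (site d)) (y : site d) : Prop :=
  (0 < size s)%N /\ last x s = y.

Definition path_cost (x : site d) (s : seq (site d)) : R :=
  \sum_(c <- pairmap sigma_t x s) c.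

Definition T_t (x y : site d) : R :=
  inf [set c | exists s, is_path x s y /\ c = path_cost x s].

End Passage.

Definition in_box (R : realType) (d : nat) (t : R) (c z : site d) : Prop :=
  forall i, (c i)%:~R - t / 2 < (z i)%:~R :> R /\ (z i)%:~R <= (c i)%:~R + t / 2.

Definition path_hits (d : nat) (x : site d) (s : seq (site d)) (L : set (site d))
  : Prop :=
  exists i, (i < (size s).+1)%N /\ L (nth x (x :: s) i).

From HB Require Import structures.
From mathcomp Require Import all_boot all_order all_algebra.
From mathcomp Require Import all_classical all_reals ereal.
From mathcomp.algebra_tactics Require Import ring lra.
Set Implicit Arguments.
Unset Strict Implicit.
Unset Printing Implicit Defensive.
Import Order.TTheory GRing.Theory Num.Theory.
Local Open Scope classical_set_scope.
Local Open Scope ring_scope.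

(* An optimal path costs at most sigma_t(0,x) <= 4Kt max(1, |x|/t), and each step costs at
   least its sup-norm length, so the path has sup-norm arc length at most 4Kt max(1, |x|/t).
   Vertices whose arc length has the same integer part after division by t lie within
   sup-distance t of each other, so the path is covered by at most 4K max(1, |x|/t) + 1
   sup-balls of radius t.  A box of side t meeting such a ball has its centre within 3t/2 of
   the ball's centre; recording this offset at resolution max(1, t/2) takes at most 8 values
   per coordinate, and two boxes with the same record have centres so close that they
   overlap, hence coincide.  So at most (4K max(1, |x|/t) + 1) 8^d <= 5 8^d K max(1, |x|/t)
   boxes are hit. *)

Section DistInf.
Variable d : nat.
Implicit Types a b c : site d.

Lemma dist_inf_coord a b (i : 'I_d) : (`|a i - b i|%N <= dist_inf a b)%N.
Proof. exact: (leq_bigmax (F := fun i => `|a i - b i|%N)). Qed.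

Lemma dist_inf_triangle a b c : (dist_inf a c <= dist_inf a b + dist_inf b c)%N.
Proof.
apply/bigmax_leqP => i _; apply: leq_trans (leqD_dist (a i) (b i) (c i)) _.
by apply: leq_add; apply: dist_inf_coord.
Qed.

Lemma dist_infC a b : dist_inf a b = dist_inf b a.
Proof. by apply: eq_bigr => i _; rewrite distnC. Qed.

Lemma dist_infxx a : dist_inf a a = 0%N.
Proof. by apply/eqP; rewrite -leqn0; apply/bigmax_leqP => i _; rewrite subrr. Qed.

Lemma nn_step_dist_inf a b : nn_step a b -> (dist_inf a b <= 1)%N.
Proof.
rewrite /nn_step => ab1; apply/bigmax_leqP => i _.
by rewrite -ab1 (bigD1 i) //= leq_addr.
Qed.

Lemma walk_dist_inf_le (S : site d -> nat -> nat -> site d) x l k :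
  walk_family S -> (1 <= l)%N -> (dist_inf (S x l k) x <= k)%N.
Proof.
move=> W l1; have [S0 Sstep] := W x l l1.
elim: k => [|k IH]; first by rewrite S0 dist_infxx.
apply: leq_trans (dist_inf_triangle _ (S x l k) _) _.
have step := nn_step_dist_inf (Sstep k); rewrite dist_infC in step.
by rewrite addnC -[X in (_ <= X)%N]addn1 leq_add.
Qed.

End DistInf.

Definition arc_length (d : nat) (f : nat -> site d) (i : nat) : nat :=
  \sum_(j < i) dist_inf (f j) (f j.+1).

Section ArcLength.
Variables (d : nat) (f : nat -> site d).

Lemma dist_inf_arc_lengthD i k :
  (dist_inf (f i) (f (i + k)) + arc_length f i <= arc_length f (i + k))%N.
Proof.
elim: k => [|k IH]; first by rewrite addn0 dist_infxx.
rewrite addnS /arc_length big_ord_recr /= -/(arc_length f (i + k)).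
apply: leq_trans (leq_add IH (leqnn _)).
by rewrite addnAC leq_add2r dist_inf_triangle.
Qed.

Lemma dist_inf_le_arc_lengthB i j : (i <= j)%N ->
  (dist_inf (f i) (f j) + arc_length f i <= arc_length f j)%N.
Proof. by move=> ij; rewrite -(subnKC ij) dist_inf_arc_lengthD. Qed.

Lemma arc_length_homo : {homo arc_length f : i j / (i <= j)%N}.
Proof. by move=> i j /dist_inf_le_arc_lengthB; apply: leq_trans; apply: leq_addl. Qed.

End ArcLength.

Lemma truncn_eq_dist_lt1 (R : archiRealFieldType) (a b : R) :
  0 <= a -> 0 <= b -> Num.truncn a = Num.truncn b -> `|a - b| < 1.
Proof.
move=> a0 b0 ab; have /andP[lea lta] := truncn_itv a0.
have /andP[leb ltb] := truncn_itv b0.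
rewrite ab -addn1 natrD in lta; rewrite ab in lea; rewrite -addn1 natrD in ltb.
by rewrite ltr_norml; apply/andP; split; lra.
Qed.

Lemma arc_level_dist_inf_lt (R : archiRealFieldType) d (f : nat -> site d) (t : R) i j :
  0 < t ->
  Num.truncn ((arc_length f i)%:R / t) = Num.truncn ((arc_length f j)%:R / t) ->
  (dist_inf (f i) (f j))%:R < t.
Proof.
wlog ij : i j / (i <= j)%N.
  move=> wlog_ij t0 eq_lv; have [ij|/ltnW ji] := leqP i j; first exact: wlog_ij.
  by rewrite dist_infC; apply: wlog_ij ji t0 (esym eq_lv).
move=> t0 eq_lv.
have ge0 k : 0 <= (arc_length f k)%:R / t by rewrite divr_ge0 // ltW.
have := truncn_eq_dist_lt1 (ge0 i) (ge0 j) eq_lv.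
rewrite -mulrBl normrM normfV (gtr0_norm t0) ltr_pdivrMr // mul1r.
rewrite distrC ger0_norm ?subr_ge0 ?ler_nat ?arc_length_homo //.
have := dist_inf_le_arc_lengthB f ij; rewrite -(ler_nat R) natrD; lra.
Qed.

Lemma exists_level_anchors (R : numDomainType) d (I L : Type) (f : I -> site d)
    (lv : I -> L) (t : R) :
  (forall i j, lv i = lv j -> (dist_inf (f i) (f j))%:R < t) ->
  exists a : L -> site d, forall i, (dist_inf (f i) (a (lv i)))%:R < t.
Proof.
move=> near_lv.
suff /choice[a Ha] : forall n, exists y, forall i, lv i = n -> (dist_inf (f i) y)%:R < t.
  by exists a => i; apply: Ha.
move=> n; have [[i <-]|none] := pselect (exists i, lv i = n).
  by exists (f i) => j; apply: near_lv.
by exists (site0 d) => i lv_i; case: none; exists i.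
Qed.

Lemma int_gap_le_half (R : realFieldType) (t : R) (a b : int) : 0 <= t -> a <= b ->
  (b - a)%:~R < Num.max 1 (t / 2) -> b%:~R <= a%:~R + t / 2 :> R.
Proof.
move=> t0 ab; have [->|neq_ab] := eqVneq a b; first by lra.
have : a + 1 <= b by rewrite lezD1 lt_neqAle neq_ab.
by rewrite -(ler_int R) intrD intrB lt_max => ? /orP[]; lra.
Qed.

Lemma in_box_max (R : realType) d (t : R) (c c' : site d) : 0 < t ->
  (forall i, `|(c i)%:~R - (c' i)%:~R| < Num.max 1 (t / 2) :> R) ->
  in_box t c (fun i => Num.max (c i) (c' i)).
Proof.
move=> t0 close i; have {close} := close i.
have [cc'|/ltW c'c] := leP (c i) (c' i); last by rewrite -(ler_int R) in c'c; split; lra.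
rewrite distrC -intrB ger0_norm ?ler0z ?subr_ge0 // => /(int_gap_le_half (ltW t0) cc').
by rewrite -(ler_int R) in cc'; split; lra.
Qed.

Lemma count_le_card_inj (T : eqType) (U : finType) (P : pred T) (f : T -> U) (s : seq T) :
  uniq s -> {in seq.filter P s &, injective f} -> (count P s <= #|U|)%N.
Proof.
move=> s_uniq f_inj; rewrite -size_filter -(size_map f).
have /card_uniqP <- : uniq (map f (seq.filter P s)) by rewrite map_inj_in_uniq ?filter_uniq.
exact: max_card.
Qed.

Lemma exists_box_centres (R : realType) d (t : R) (Lam : nat -> set (site d)) :
  (forall q, (1 <= q)%N -> exists c : site d, forall z, Lam q z <-> in_box t c z) ->
  exists c : nat -> site d, forall q, (1 <= q)%N -> forall z, Lam q z <-> in_box t (c q) z.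
Proof.
move=> Lam_box.
suff /choice[c Hc] : forall q, exists c : site d,
    (1 <= q)%N -> forall z, Lam q z <-> in_box t c z by exists c.
move=> q; have [/Lam_box[c Hc]|_] := boolP (1 <= q)%N; first by exists c.
by exists (site0 d).
Qed.

Section BoxCount.
Variables (R : realType) (d : nat) (t : R) (Lam : nat -> set (site d)) (c : nat -> site d).
Hypotheses (t0 : 0 < t)
  (Lam_box : forall q, (1 <= q)%N -> forall z, Lam q z <-> in_box t (c q) z)
  (Lam_uniq : forall z, exists! q, (1 <= q)%N /\ Lam q z).

Lemma eq_box_of_close q q' : (1 <= q)%N -> (1 <= q')%N ->
  (forall i, `|(c q i)%:~R - (c q' i)%:~R| < Num.max 1 (t / 2) :> R) -> q = q'.
Proof.
move=> q1 q'1 close; pose z i := Num.max (c q i) (c q' i).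
have Lz : Lam q z by apply/Lam_box/in_box_max.
have Lz' : Lam q' z.
  have -> : z = fun i => Num.max (c q' i) (c q i) by apply: funext => i; rewrite /z maxC.
  by apply/Lam_box/in_box_max => // i; rewrite distrC.
have [q0 [_ q0_uniq]] := Lam_uniq z.
by rewrite -(q0_uniq q (conj q1 Lz)) (q0_uniq q' (conj q'1 Lz')).
Qed.

Lemma centre_near_anchor q z a : (1 <= q)%N -> Lam q z -> (dist_inf z a)%:R < t ->
  forall i, `|(c q i)%:~R - (a i)%:~R| < 3 / 2 * t :> R.
Proof.
move=> q1 /(Lam_box q1 z) z_in za i; have [lo hi] := z_in i.
have : `|(z i)%:~R - (a i)%:~R| < t :> R.
  apply: le_lt_trans za; rewrite -intrB -intr_norm -natr_absz ler_nat.
  exact: dist_inf_coord.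
by rewrite !ltr_norml => /andP[? ?]; apply/andP; split; lra.
Qed.

Lemma count_boxes_near_anchors (P : pred nat) (a : nat -> site d) (N Q : nat) :
  (forall q, P q -> exists2 z, Lam q z & exists2 j, (j <= N)%N & (dist_inf z (a j))%:R < t) ->
  (count P (index_iota 1 Q.+1) <= N.+1 * 8 ^ d)%N.
Proof.
move=> hits.
have /choice[j Hj] : forall q, exists j, P q -> (1 <= q)%N ->
    (j <= N)%N /\ forall i, `|(c q i)%:~R - (a j i)%:~R| < 3 / 2 * t :> R.
  move=> q; have [/hits[z Lz [j jN za]]|_] := boolP (P q); last by exists 0%N.
  by exists j => _ q1; split => //; apply: centre_near_anchor Lz za.
pose s := Num.max 1 (t / 2).
have s_gt0 : 0 < s by rewrite lt_max ltr01.
have t_le_2s : t / 2 <= s by rewrite le_max lexx orbT.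
pose u q i := ((c q i)%:~R - (a (j q) i)%:~R + 2 * t) / s.
have u_range q i : P q -> (1 <= q)%N -> 0 <= u q i < 8.
  move=> Pq q1; have [_ /(_ i)] := Hj q Pq q1; rewrite ltr_norml => /andP[lo hi].
  by apply/andP; split; [apply: divr_ge0; lra | rewrite ltr_pdivrMr //; lra].
pose code q : 'I_N.+1 * {ffun 'I_d -> 'I_8} :=
  (inord (j q), [ffun i => inord (Num.truncn (u q i))]).
have := @count_le_card_inj _ _ P code (index_iota 1 Q.+1) (iota_uniq _ _).
rewrite card_prod card_ffun !card_ord; apply.
move=> q q'; rewrite !mem_filter !mem_index_iota.
move=> /andP[Pq /andP[q1 _]] /andP[Pq' /andP[q'1 _]] [].
move=> /(congr1 (@nat_of_ord _)); rewrite !inordK ?ltnS ?(Hj q Pq q1).1 ?(Hj q' Pq' q'1).1 // => jq.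
move=> /ffunP same_u; apply: eq_box_of_close => // i.
have /andP[u0 u8] := u_range q i Pq q1; have /andP[u0' u8'] := u_range q' i Pq' q'1.
have := congr1 (@nat_of_ord _) (same_u i); rewrite !ffunE !inordK ?ltnS ?truncn_le_nat //.
move=> /(truncn_eq_dist_lt1 u0 u0'); rewrite /u jq -mulrBl normrM normfV (gtr0_norm s_gt0).
by rewrite ltr_pdivrMr // mul1r; congr (`|_| < _); ring.
Qed.

End BoxCount.

Lemma sum_pairmap (V : nmodType) (T : Type) (f : T -> T -> V) (x0 x : T) (s : seq T) :
  \sum_(v <- pairmap f x s) v =
  \sum_(j < size s) f (nth x0 (x :: s) j) (nth x0 (x :: s) j.+1).
Proof.
elim: s x => [|y s IH] x /=; first by rewrite big_nil big_ord0.
by rewrite big_cons big_ord_recl /= IH.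
Qed.

Section PassageCost.
Variables (R : realType) (d : nat) (K t : R) (om : site d -> nat)
  (S : site d -> nat -> nat -> site d).
Hypotheses (W : walk_family S) (K_ge : 1 <= 4 * K).

Let sigma := sigma_t K t om S.

Lemma dist_inf_le_tau x y : ((dist_inf x y)%:R%:E <= tau R om S x y)%E.
Proof.
apply/ereal_infP => _ [k [l [/andP[l1 _] <-]] <-].
by rewrite lee_fin ler_nat dist_infC walk_dist_inf_le.
Qed.

Lemma dist_inf_le_sigma_t x y : (dist_inf x y)%:R <= sigma x y.
Proof.
rewrite /sigma /sigma_t; set n : R := (dist_inf x y)%:R.
have n0 : 0 <= n by rewrite /n ler0n.
have := dist_inf_le_tau x y; rewrite -/n; clearbody n => n_tau.
case: ifP => [_|/negbT]; first by rewrite -[X in X <= _]mul1r ler_wpM2r.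
rewrite -leNgt => n_t; have t0 := le_trans n0 n_t.
case: ifP => [_|]; first by apply: le_trans n_t _; rewrite -[X in X <= _]mul1r ler_wpM2r.
by case: (tau R om S x y) n_tau => [r| |] //=; rewrite ltry.
Qed.

Lemma sigma_t_le x y M : 0 < t -> 1 <= M -> (dist_inf x y)%:R / t <= M ->
  sigma x y <= 4 * K * t * M.
Proof.
rewrite /sigma /sigma_t => t0 M1; set n : R := (dist_inf x y)%:R.
rewrite ler_pdivrMr // => n_tM; have n0 : 0 <= n by rewrite /n ler0n.
have := dist_inf_le_tau x y; rewrite -/n; clearbody n => n_tau.
have K0 : 0 <= 4 * K := le_trans ler01 K_ge.
have Kt_tM : 4 * K * t <= 4 * K * t * M by rewrite ler_peMr // mulr_ge0 // ltW.
case: ifP => [_|_]; first by rewrite -[4 * K * t * M]mulrA [t * M]mulrC ler_wpM2l.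
case: ifP => [_|]; first by [].
case: (tau R om S x y) n_tau => [r| |] //= _; last by rewrite ltry.
by rewrite lte_fin ltNge => /negbFE /le_trans; apply.
Qed.

Lemma path_cost_ge0 x s : 0 <= path_cost K t om S x s.
Proof.
rewrite /path_cost (sum_pairmap _ x); apply: sumr_ge0 => j _.
exact: le_trans (ler0n _ _) (dist_inf_le_sigma_t _ _).
Qed.

Lemma arc_length_le_path_cost x s :
  (arc_length (nth x (x :: s)) (size s))%:R <= path_cost K t om S x s.
Proof.
rewrite /path_cost (sum_pairmap _ x) /arc_length natr_sum; apply: ler_sum => j _.
exact: dist_inf_le_sigma_t.
Qed.

Lemma T_t_le_sigma_t x y : T_t K t om S x y <= sigma x y.
Proof.
apply: ge_inf; first by exists 0 => _ [s [_ ->]]; apply: path_cost_ge0.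
exists [:: y]; split; first by [].
by rewrite /path_cost /= big_cons big_nil addr0.
Qed.

Lemma arc_length_le_of_optimal x y s : 0 < t -> T_t K t om S x y = path_cost K t om S x s ->
  (arc_length (nth x (x :: s)) (size s))%:R <= 4 * K * t * Num.max 1 ((dist_inf x y)%:R / t).
Proof.
move=> t0 s_opt; apply: le_trans (arc_length_le_path_cost x s) _.
rewrite -s_opt; apply: le_trans (T_t_le_sigma_t x y) _.
by apply: sigma_t_le; rewrite // le_max lexx ?orbT.
Qed.

End PassageCost.

Lemma truncn_div_succ_le (R : archiRealFieldType) (a t K M : R) : 0 < t -> 0 <= a ->
  1 <= K -> 1 <= M -> a <= 4 * K * t * M -> (Num.truncn (a / t)).+1%:R <= 5 * K * M.
Proof.
move=> t0 a0 K1 M1 a_le; have KM1 : 1 <= K * M by rewrite mulr_ege1.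
have : a / t <= 4 * K * M by rewrite ler_pdivrMr // mulrAC.
have := truncn_le (a / t); rewrite divr_ge0 ?(ltW t0) // -addn1 natrD; lra.
Qed.

Lemma sumr_indicator_count (V : pzSemiRingType) (T : Type) (P : pred T) (r : seq T) :
  \sum_(i <- r) (if P i then 1 else 0 : V) = (count P r)%:R.
Proof. by rewrite -big_mkcond -sum1_count natr_sum. Qed.

Theorem lemma4p4 (R : realType) (d : nat) (C0 gamma K : R) :
  (2 <= d)%N -> 0 < C0 -> 0 < gamma -> d%:R * (C0 + gamma + 1) < K ->
  exists C : R, 1 <= C /\
  forall (x : site d) (t : R) (om : site d -> nat)
         (S : site d -> nat -> nat -> site d)
         (Lam : nat -> set (site d)) (Q : nat) (pi : seq (site d)),
    x <> site0 d -> 0 < t -> walk_family S ->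
    (forall q, (1 <= q)%N -> exists c : site d, forall z, Lam q z <-> in_box t c z) ->
    (forall z, exists! q, (1 <= q)%N /\ Lam q z) ->
    is_path (site0 d) pi x ->
    T_t K t om S (site0 d) x = path_cost K t om S (site0 d) pi ->
    \sum_(1 <= q < Q.+1)
        (if `[< path_hits (site0 d) pi (Lam q) >] then 1 else 0 : R)
      <= C * K * Num.max 1 ((dist_inf x (site0 d))%:R / t).
Proof.
move=> d2 C0_gt0 gamma_gt0 K_gt.
have d_ge2 : 2 <= d%:R :> R by rewrite (ler_nat R 2).
have K1 : 1 <= K by nra.
have pow8_ge1 : 1 <= (8 ^ d)%:R :> R by rewrite (ler_nat R 1) expn_gt0.
have K_ge : 1 <= 4 * K by lra.
exists (5 * (8 ^ d)%:R); split=> [|x t om S Lam Q pi _ t0 W Lam_centre Lam_uniq _ pi_opt].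
  by lra.
have [c Lam_box] := exists_box_centres Lam_centre.
set M := Num.max 1 _.
pose v := nth (site0 d) (site0 d :: pi).
pose lv i := Num.truncn ((arc_length v i)%:R / t).
have [a near_a] := exists_level_anchors (lv := lv)
  (fun i j => @arc_level_dist_inf_lt R d v t i j t0).
have hits q : `[< path_hits (site0 d) pi (Lam q) >] ->
    exists2 z, Lam q z & exists2 j, (j <= lv (size pi))%N & (dist_inf z (a j))%:R < t.
  move=> /asboolP[i [i_le Lvi]]; exists (v i) => //; exists (lv i) => //.
  apply: le_truncn; rewrite ler_pM2r ?invr_gt0 // ler_nat.
  by apply: arc_length_homo; rewrite -ltnS.
have := count_boxes_near_anchors t0 Lam_box Lam_uniq Q hits.
rewrite sumr_indicator_count -(ler_nat R) natrM => /le_trans; apply.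
rewrite (_ : _ * K * M = 5 * K * M * (8 ^ d)%:R); last by ring.
apply: ler_wpM2r => //; apply: truncn_div_succ_le; rewrite ?ler0n ?le_max ?lexx //.
by rewrite /M dist_infC; move: (arc_length_le_of_optimal W K_ge t0 pi_opt).
Qed.
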